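(* Let $F$ be a continuous, strictly increasing CDF on $[0,1]$ and $v\in[0,1]$, and suppose Assumption 2 holds with constants $\Delta>0$, $0<c_f<C_f$, $\lambda>0$. Let $W_{v,F}(q)=U_{v,F}(F^{-1}(q))$ and $q^*_{v,F}=F(b^*_{v,F})$. Then for every $q\in[q^*_{v,F},\,q^*_{v,F}+C_f\Delta]$ (with $F^{-1}(q)\in[b^*_{v,F},b^*_{v,F}+\Delta]$), $$W_{v,F}(q^*_{v,F})-W_{v,F}(q)\ \le\ \frac{\lambda}{c_f}\,(q^*_{v,F}-q)^2.$$
   Context: $U_{v,F}(b)=(v-b)F(b)$, $b^*_{v,F}=\max\{\operatorname{argmax}_{b\in[0,1]}U_{v,F}(b)\}$. Assumption 2 (constants $\Delta>0$, $c_f,C_f,\lambda$): $F$ admits a density $f$ with $c_f<f(b)<C_f$ for all $b\in[b^*_{v,F}-\Delta,b^*_{v,F}+\Delta]$, and $\phi_F:b\mapsto b+F(b)/f(b)$ is differentiable with $\phi_F'(b)\le\lambda$ on $[b^*_{v,F},b^*_{v,F}+\Delta]$. *)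

From Stdlib Require Import Reals.
From Coquelicot Require Import Coquelicot.
Open Scope R_scope.

Definition U (v : R) (F : R -> R) (b : R) : R := (v - b) * F b.

Definition cont_strict_cdf01 (F : R -> R) : Prop :=
  (forall x, x <= 0 -> F x = 0) /\
  (forall x, 1 <= x -> F x = 1) /\
  (forall x, continuity_pt F x) /\
  (forall x y, 0 <= x -> x < y -> y <= 1 -> F x < F y).

Definition is_bstar (v : R) (F : R -> R) (bs : R) : Prop :=
  (0 <= bs <= 1) /\
  (forall b, 0 <= b <= 1 -> U v F b <= U v F bs) /\
  (forall b, 0 <= b <= 1 -> U v F b = U v F bs -> b <= bs).

(* g has derivative d at x, relative to the domain [0,1] (the support of F) *)
Definition deriv01 (g : R -> R) (x d : R) : Prop :=
  forall eps, 0 < eps -> exists delta, 0 < delta /\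
    forall y, 0 <= y <= 1 -> Rabs (y - x) < delta ->
      Rabs (g y - g x - d * (y - x)) <= eps * Rabs (y - x).

Definition phi (F f : R -> R) (b : R) : R := b + F b / f b.

Definition assumption2 (v : R) (F f : R -> R) (bs Delta cf Cf lam : R) : Prop :=
  (forall b, bs - Delta <= b <= bs + Delta -> 0 <= b <= 1 ->
       deriv01 F b (f b) /\ cf < f b < Cf) /\
  (forall b, bs <= b <= bs + Delta -> 0 <= b <= 1 ->
       exists d, deriv01 (phi F f) b d /\ d <= lam).

Definition Finv (F : R -> R) (q : R) : R :=
  real (Glb_Rbar (fun b => 0 <= b <= 1 /\ q <= F b)).

Definition W (v : R) (F : R -> R) (q : R) : R := U v F (Finv F q).

From Stdlib Require Import Reals Lra Classical.
From Coquelicot Require Import Coquelicot.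
Open Scope R_scope.

(* Write b = F^{-1}(q) and K = lam / cf.  Since F(b) <= q and F is
   nondecreasing, 0 <= F(b) - q* <= q - q*, and W(q* ) <= U(b* ) because b*
   maximises U on [0,1].  It therefore suffices to show
        U(b* ) - U(b) <= K (F(b) - F(b* ))^2            for b* <= b.
   The auxiliary function  gap(y) = U(b* ) - U(y) - K (F(y) - F(b* ))^2
   vanishes at b* and has derivative  f(y) (phi(y) - v - 2K (F(y) - F(b* ))).
   The first-order condition for the maximiser gives phi(b* ) <= v, and the
   mean value inequality turns the bounds phi' <= lam and f >= cf into
   phi(y) - phi(b* ) <= lam (y - b* ) and F(y) - F(b* ) >= cf (y - b* ); hence
   gap' <= -lam f (y - b* ) <= 0 and gap(b) <= 0 by the mean value theorem. *)

Lemma deriv01_secant (g : R -> R) (x d K : R) :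
  deriv01 g x d -> d < K ->
  exists delta, 0 < delta /\
    forall y, 0 <= y <= 1 -> Rabs (y - x) < delta ->
      (x <= y -> g y - g x <= K * (y - x)) /\
      (y <= x -> g x - g y <= K * (x - y)).
Proof.
  intros Hd HdK.
  destruct (Hd (K - d)) as [delta [Hdelta Happrox]]; [lra|].
  exists delta; split; [exact Hdelta|].
  intros y Hy Hyx; specialize (Happrox y Hy Hyx).
  apply Rabs_le_between in Happrox.
  split; intros Hxy.
  - rewrite Rabs_right in Happrox by lra. lra.
  - rewrite Rabs_left1 in Happrox by lra. lra.
Qed.

(* Negation of a differentiable function; used to bound F from below. *)
Lemma deriv01_opp (g : R -> R) (x d : R) :
  deriv01 g x d -> deriv01 (fun y => - g y) x (- d).
Proof.
  intros Hd eps Heps.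
  destruct (Hd eps Heps) as [delta [Hdelta Happrox]].
  exists delta; split; [exact Hdelta|].
  intros y Hy Hyx.
  replace (- g y - - g x - - d * (y - x)) with (- (g y - g x - d * (y - x))) by ring.
  rewrite Rabs_Ropp. exact (Happrox y Hy Hyx).
Qed.

Lemma deriv01_is_derive (g : R -> R) (x d : R) :
  0 < x < 1 -> deriv01 g x d -> is_derive g x d.
Proof.
  intros Hx Hd. apply is_derive_Reals. intros eps Heps.
  destruct (Hd (eps / 2)) as [delta [Hdelta Happrox]]; [lra|].
  assert (Hr : 0 < Rmin delta (Rmin x (1 - x))).
  { apply Rmin_glb_lt; [lra|]. apply Rmin_glb_lt; lra. }
  exists (mkposreal _ Hr). intros h Hh0 Hh. simpl in Hh.
  pose proof (Rmin_l delta (Rmin x (1 - x))).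
  pose proof (Rmin_r delta (Rmin x (1 - x))).
  pose proof (Rmin_l x (1 - x)). pose proof (Rmin_r x (1 - x)).
  apply Rabs_lt_between in Hh.
  assert (Hxh := Happrox (x + h) ltac:(lra)
                   ltac:(replace (x + h - x) with h by ring; apply Rabs_lt_between; lra)).
  replace (x + h - x) with h in Hxh by ring.
  replace ((g (x + h) - g x) / h - d) with ((g (x + h) - g x - d * h) / h)
    by (field; exact Hh0).
  assert (Habs : 0 < Rabs h) by (apply Rabs_pos_lt; exact Hh0).
  rewrite Rabs_div by exact Hh0.
  apply (Rmult_lt_reg_r (Rabs h)); [exact Habs|].
  unfold Rdiv. rewrite Rmult_assoc, Rinv_l by lra. nra.
Qed.

Lemma deriv01_U (F : R -> R) (v x d : R) :
  0 <= v <= 1 -> deriv01 F x d -> deriv01 (U v F) x ((v - x) * d - F x).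
Proof.
  intros Hv Hd eps Heps.
  destruct (Hd (eps / 2)) as [delta [Hdelta Happrox]]; [lra|].
  set (r := eps / (2 * (Rabs d + 1))).
  assert (Hr : 0 < r) by (unfold r; apply Rdiv_lt_0_compat; pose proof (Rabs_pos d); lra).
  exists (Rmin delta r); split; [apply Rmin_glb_lt; lra|].
  intros y Hy Hyx.
  pose proof (Rmin_l delta r). pose proof (Rmin_r delta r).
  assert (Hrem := Happrox y Hy ltac:(lra)).
  replace (U v F y - U v F x - ((v - x) * d - F x) * (y - x))
    with ((v - y) * (F y - F x - d * (y - x)) + - (d * (y - x) * (y - x)))
    by (unfold U; ring).
  assert (Hfirst : Rabs ((v - y) * (F y - F x - d * (y - x))) <= eps / 2 * Rabs (y - x)).
  { rewrite Rabs_mult.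
    assert (Rabs (v - y) <= 1) by (apply Rabs_le_between; lra).
    pose proof (Rabs_pos (F y - F x - d * (y - x))). nra. }
  assert (Hdr : Rabs d * Rabs (y - x) <= eps / 2).
  { assert (Rabs d * Rabs (y - x) <= (Rabs d + 1) * r)
      by (pose proof (Rabs_pos d); pose proof (Rabs_pos (y - x)); nra).
    assert ((Rabs d + 1) * r = eps / 2)
      by (unfold r; field; pose proof (Rabs_pos d); lra).
    lra. }
  assert (Hsecond : Rabs (- (d * (y - x) * (y - x))) <= eps / 2 * Rabs (y - x)).
  { rewrite Rabs_Ropp, !Rabs_mult.
    apply Rmult_le_compat_r; [apply Rabs_pos | exact Hdr]. }
  eapply Rle_trans; [apply Rabs_triang|]. lra.
Qed.

(* The supremum
   s of the points x where the bound holds satisfies it itself (approach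
   from the left) and cannot lie below c (step to the right). *)
Lemma slope_bound_strict (g : R -> R) (K a c : R) :
  0 <= a -> a <= c -> c <= 1 ->
  (forall x, a <= x <= c -> exists d, deriv01 g x d /\ d < K) ->
  g c - g a <= K * (c - a).
Proof.
  intros Ha Hac Hc Hder.
  set (E := fun x => a <= x <= c /\ g x - g a <= K * (x - a)).
  destruct (completeness E) as [s [Hub Hlub]].
  { exists c. intros x [Hx _]. lra. }
  { exists a. split; lra. }
  assert (Has : a <= s) by (apply Hub; split; lra).
  assert (Hsc : s <= c) by (apply Hlub; intros x [Hx _]; lra).
  destruct (Hder s (conj Has Hsc)) as [d [Hd HdK]].
  destruct (deriv01_secant g s d K Hd HdK) as [delta [Hdelta Hsec]].
  assert (Es : g s - g a <= K * (s - a)).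
  { destruct (Req_dec s a) as [->|Hsa]; [lra|].
    set (r := Rmin delta (s - a)).
    assert (Hr : 0 < r) by (apply Rmin_glb_lt; lra).
    assert (Hrd : r <= delta) by apply Rmin_l.
    assert (Hclose : exists x, E x /\ s - r < x).
    { apply NNPP; intro Hnone.
      enough (s <= s - r) by lra.
      apply Hlub; intros x Ex; apply Rnot_lt_le; intro Hlt.
      apply Hnone; exists x; split; assumption. }
    destruct Hclose as [x [[Hx Ex] Hxs]].
    assert (Hxs' : x <= s) by (apply Hub; split; assumption).
    destruct (Hsec x) as [_ Hleft]; [lra | rewrite Rabs_left1; lra |].
    specialize (Hleft Hxs'). lra. }
  destruct (Rle_lt_or_eq_dec s c Hsc) as [Hlt|<-]; [|exact Es].
  exfalso.
  set (y := s + Rmin delta (c - s) / 2).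
  assert (Hm : 0 < Rmin delta (c - s)) by (apply Rmin_glb_lt; lra).
  pose proof (Rmin_l delta (c - s)). pose proof (Rmin_r delta (c - s)).
  destruct (Hsec y) as [Hright _];
    [unfold y; lra | unfold y; rewrite Rabs_right; lra |].
  specialize (Hright ltac:(unfold y; lra)).
  assert (Ey : E y) by (split; [unfold y; lra | lra]).
  assert (y <= s) by (apply Hub; exact Ey).
  unfold y in *. lra.
Qed.

Lemma slope_bound (g : R -> R) (M a c : R) :
  0 <= a -> a <= c -> c <= 1 ->
  (forall x, a <= x <= c -> exists d, deriv01 g x d /\ d <= M) ->
  g c - g a <= M * (c - a).
Proof.
  intros Ha Hac Hc Hder.
  apply Rle_plus_epsilon; intros eps Heps.
  set (e := eps / (c - a + 1)).
  assert (He : 0 < e) by (unfold e; apply Rdiv_lt_0_compat; lra).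
  assert (Hinc := slope_bound_strict g (M + e) a c Ha Hac Hc).
  assert (He' : e * (c - a) = eps - e) by (unfold e; field; lra).
  enough (g c - g a <= (M + e) * (c - a)) by lra.
  apply Hinc. intros x Hx.
  destruct (Hder x Hx) as [d [Hd HdM]].
  exists d; split; [exact Hd | lra].
Qed.

Lemma deriv01_nonneg_at_left_max (g : R -> R) (x d : R) :
  0 < x <= 1 -> deriv01 g x d ->
  (forall y, 0 <= y <= x -> g y <= g x) -> 0 <= d.
Proof.
  intros Hx Hd Hmax.
  apply Rnot_lt_le; intro Hneg.
  destruct (deriv01_secant g x d (d / 2) Hd ltac:(lra)) as [delta [Hdelta Hsec]].
  set (y := x - Rmin delta x / 2).
  assert (Hm : 0 < Rmin delta x) by (apply Rmin_glb_lt; lra).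
  pose proof (Rmin_l delta x). pose proof (Rmin_r delta x).
  destruct (Hsec y) as [_ Hleft];
    [unfold y; lra | unfold y; rewrite Rabs_left1; lra |].
  specialize (Hleft ltac:(unfold y; lra)).
  assert (d / 2 * (x - y) < 0) by (apply Rmult_neg_pos; unfold y; lra).
  assert (g y <= g x) by (apply Hmax; unfold y; lra).
  lra.
Qed.

(* The optimal bid satisfies phi(b* ) <= v: either b* = 0 and phi(0) = 0,
   or b* > 0 and the first-order condition U'(b* ) >= 0 applies. *)
Lemma bstar_phi_le_v (F f : R -> R) (v bs : R) :
  0 <= v <= 1 -> is_bstar v F bs -> F 0 = 0 ->
  deriv01 F bs (f bs) -> 0 < f bs -> phi F f bs <= v.
Proof.
  intros Hv [Hbs [Hmax _]] HF0 Hd Hf.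
  unfold phi.
  destruct (Req_dec bs 0) as [->|Hb0].
  { rewrite HF0. unfold Rdiv. rewrite Rmult_0_l. lra. }
  assert (Hfoc : 0 <= (v - bs) * f bs - F bs).
  { apply (deriv01_nonneg_at_left_max (U v F) bs); [lra | apply deriv01_U; assumption |].
    intros y Hy. apply Hmax. lra. }
  assert (F bs / f bs * f bs = F bs) by (field; lra).
  nra.
Qed.

Lemma cdf_monotone (F : R -> R) (x y : R) :
  cont_strict_cdf01 F -> 0 <= x -> x <= y -> y <= 1 -> F x <= F y.
Proof.
  intros [_ [_ [_ Hincr]]] Hx Hxy Hy.
  destruct (Req_dec x y) as [->|Hne]; [lra|].
  left; apply Hincr; lra.
Qed.

Lemma Finv_glb (F : R -> R) (q : R) :
  q <= F 1 ->
  0 <= Finv F q <= 1 /\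
  (forall b, 0 <= b <= 1 -> q <= F b -> Finv F q <= b).
Proof.
  intros Hq1. unfold Finv.
  destruct (Glb_Rbar_correct (fun b => 0 <= b <= 1 /\ q <= F b)) as [Hlb Hglb].
  assert (H1 := Hlb 1 (conj (conj Rle_0_1 (Rle_refl 1)) Hq1)).
  assert (H0 := Hglb (Finite 0) ltac:(intros x [Hx _]; simpl; lra)).
  destruct (Glb_Rbar _) as [r| |]; simpl in *; try contradiction.
  split; [lra|].
  intros b Hb Hqb. exact (Hlb b (conj Hb Hqb)).
Qed.

Lemma Finv_le (F : R -> R) (q : R) :
  (forall x, continuity_pt F x) -> F 0 <= q -> q <= F 1 ->
  F (Finv F q) <= q.
Proof.
  intros Hc Hq0 Hq1.
  destruct (Finv_glb F q Hq1) as [[Hb0 Hb1] Hlow].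
  set (b := Finv F q) in *.
  destruct (Req_dec b 0) as [->|Hb]; [exact Hq0|].
  apply Rnot_lt_le; intro Hgt.
  destruct (Hc b (F b - q)) as [alpha [Halpha Hnear]]; [lra|].
  set (y := b - Rmin alpha b / 2).
  assert (Hm : 0 < Rmin alpha b) by (apply Rmin_glb_lt; lra).
  pose proof (Rmin_l alpha b). pose proof (Rmin_r alpha b).
  assert (Hy := Hnear y). simpl in Hy. unfold R_dist in Hy.
  assert (Hyb : b <> y) by (unfold y; lra).
  assert (Hdist : Rabs (y - b) < alpha) by (unfold y; rewrite Rabs_left1; lra).
  specialize (Hy (conj (conj I Hyb) Hdist)).
  apply Rabs_lt_between in Hy.
  assert (b <= y) by (apply Hlow; [unfold y; lra | lra]).
  unfold y in *. lra.
Qed.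

Definition quadratic_gap (v : R) (F : R -> R) (bs K y : R) : R :=
  U v F bs - U v F y - K * (F y - F bs) ^ 2.

Lemma quadratic_gap_derive (F f : R -> R) (v bs K x : R) :
  0 < x < 1 -> deriv01 F x (f x) -> f x <> 0 ->
  is_derive (quadratic_gap v F bs K) x
    (f x * (phi F f x - v - 2 * K * (F x - F bs))).
Proof.
  intros Hx Hd Hf.
  assert (HD := deriv01_is_derive F x (f x) Hx Hd).
  unfold quadratic_gap, U. auto_derive.
  - repeat split; exists (f x); exact HD.
  - replace (Derive (fun y => F y) x) with (f x)
      by (symmetry; apply is_derive_unique, HD).
    unfold phi. field. exact Hf.
Qed.

Lemma quadratic_gap_continuous (F : R -> R) (v bs K x : R) :
  (forall y, continuity_pt F y) -> continuity_pt (quadratic_gap v F bs K) x.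
Proof.
  intros HF. unfold quadratic_gap, U.
  repeat first [ apply (continuity_pt_minus (fun y => _) (fun y => _))
               | apply (continuity_pt_mult (fun y => _) (fun y => _))
               | apply (continuity_pt_pow (fun y => _)) | apply HF
               | apply continuity_pt_const; intros ??; reflexivity
               | apply derivable_continuous_pt, derivable_pt_id ].
Qed.

Lemma revenue_loss_quadratic (F f : R -> R) (v bs b cf lam : R) :
  0 <= bs <= b -> b <= 1 -> 0 < cf -> 0 <= lam ->
  (forall x, continuity_pt F x) -> phi F f bs <= v ->
  (forall x, bs <= x <= b -> deriv01 F x (f x) /\ cf <= f x) ->
  (forall x, bs <= x <= b -> exists d, deriv01 (phi F f) x d /\ d <= lam) ->
  U v F bs - U v F b <= lam / cf * (F b - F bs) ^ 2.
Proof.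
  intros Hbs Hb Hcf Hlam Hcont Hfoc Hdens Hphi'.
  set (K := lam / cf).
  assert (HKcf : K * cf = lam) by (unfold K; field; lra).
  assert (HK : 0 <= K) by (unfold K; apply Rdiv_le_0_compat; lra).
  assert (Hphi : forall x, bs <= x <= b -> phi F f x - phi F f bs <= lam * (x - bs)).
  { intros x Hx. apply slope_bound; try lra.
    intros y Hy. apply Hphi'. lra. }
  assert (HFgrow : forall x, bs <= x <= b -> cf * (x - bs) <= F x - F bs).
  { intros x Hx.
    enough (- F x - - F bs <= - cf * (x - bs)) by lra.
    apply (slope_bound (fun y => - F y)); try lra.
    intros y Hy. destruct (Hdens y ltac:(lra)) as [Hd Hf].
    exists (- f y). split; [apply deriv01_opp, Hd | lra]. }
  destruct (MVT_gen (quadratic_gap v F bs K) bs b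
              (fun x => f x * (phi F f x - v - 2 * K * (F x - F bs))))
    as [c [Hc Hmvt]].
  { intros x Hx. rewrite Rmin_left, Rmax_right in Hx by lra.
    destruct (Hdens x ltac:(lra)) as [Hd Hf].
    apply quadratic_gap_derive; [lra | exact Hd | lra]. }
  { intros x _. apply quadratic_gap_continuous, Hcont. }
  rewrite Rmin_left, Rmax_right in Hc by lra.
  assert (Hslope : phi F f c - v - 2 * K * (F c - F bs) <= 0).
  { assert (K * (cf * (c - bs)) <= K * (F c - F bs))
      by (apply Rmult_le_compat_l; [exact HK | apply HFgrow, Hc]).
    assert (0 <= lam * (c - bs)) by (apply Rmult_le_pos; lra).
    pose proof (Hphi c Hc). nra. }
  assert (Hdecr : f c * (phi F f c - v - 2 * K * (F c - F bs)) * (b - bs) <= 0).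
  { destruct (Hdens c Hc) as [_ Hf].
    assert (f c * (phi F f c - v - 2 * K * (F c - F bs)) <= 0) by nra.
    nra. }
  unfold quadratic_gap in Hmvt. fold K. lra.
Qed.

Theorem lemma6 (F f : R -> R) (v bs Delta cf Cf lam : R) :
  cont_strict_cdf01 F ->
  0 <= v <= 1 ->
  is_bstar v F bs ->
  0 < Delta -> 0 < cf -> cf < Cf -> 0 < lam ->
  assumption2 v F f bs Delta cf Cf lam ->
  forall q : R,
    F bs <= q <= F bs + Cf * Delta ->
    q <= 1 ->
    bs <= Finv F q <= bs + Delta ->
    W v F (F bs) - W v F q <= lam / cf * (F bs - q) ^ 2.
Proof.
  intros HF Hv Hbst _ Hcf _ Hlam [Hwindow Hphi'] q [Hq _] Hq1 Hb.
  pose proof HF as [HF0 [HF1 [Hcont _]]].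
  pose proof Hbst as [Hbs [Hmax _]].
  assert (HF01 : F 0 <= F bs <= F 1) by (split; apply (cdf_monotone F _ _ HF); lra).
  assert (HWopt : W v F (F bs) <= U v F bs) by (apply Hmax, Finv_glb; lra).
  destruct (Finv_glb F q) as [[_ Hb1] _]; [rewrite (HF1 1); lra|].
  unfold W in *. set (b := Finv F q) in *.
  (* q* <= F(b) <= q, so a loss bound quadratic in F(b) gives the claim *)
  assert (HFb : F bs <= F b <= q).
  { split; [apply (cdf_monotone F _ _ HF); lra|].
    apply Finv_le; [exact Hcont | lra | rewrite (HF1 1); lra]. }
  assert (Hsq : lam / cf * (F b - F bs) ^ 2 <= lam / cf * (F bs - q) ^ 2).
  { apply Rmult_le_compat_l; [apply Rdiv_le_0_compat; lra | nra]. }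
  assert (Hdens : forall x, bs <= x <= b -> deriv01 F x (f x) /\ cf <= f x).
  { intros x Hx. destruct (Hwindow x) as [Hd Hf]; [lra | lra | split; [exact Hd | lra]]. }
  assert (Hfoc : phi F f bs <= v).
  { destruct (Hdens bs) as [Hd Hf]; [lra|].
    apply (bstar_phi_le_v F f v bs Hv Hbst (HF0 0 (Rle_refl 0)) Hd); lra. }
  enough (U v F bs - U v F b <= lam / cf * (F b - F bs) ^ 2) by lra.
  apply (revenue_loss_quadratic F f); try lra; try assumption.
  intros x Hx. apply Hphi'; lra.
Qed.
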